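(* Let $L\ge2$, $d\in\mathbb{N}_+$, and let $W_l(t)\in\mathbb{R}^{d\times d}$, $l\in[L]$, be gradient descent iterates for the loss $\ell=\frac12\|W_{L:1}X-Y\|_F^2$, where $X\in\mathbb{R}^{d\times N}$ satisfies $XX^\top=I_d$ and $Y\in\mathbb{R}^{d\times N}$, with update $$W_l(t)=(1-\eta\lambda)W_l(t-1)-\eta\,W_{L:l+1}^\top(t-1)\,\Gamma(t-1)\,W_{l-1:1}^\top(t-1),\quad \Gamma(t)=(W_{L:1}(t)X-Y)X^\top,$$ learning rate $\eta>0$, weight decay $\lambda\ge0$, and initialization $W_l^\top(0)W_l(0)=\varepsilon^2 I_d$ for all $l\in[L]$, $\varepsilon>0$. Let $\Phi=YX^\top$ have rank $r\in\mathbb{N}_+$ and suppose $m:=d-2r>0$. Then there exist orthonormal sets $\{u_i^{(l)}\}_{i=1}^m\subset\mathbb{R}^d$ and $\{v_i^{(l)}\}_{i=1}^m\subset\mathbb{R}^d$, $l\in[L]$, with $v_i^{(l+1)}=u_i^{(l)}$ for all $l\in[L-1]$ and $i\in[m]$, such that for all $t\ge0$, all $i\in[m]$ and all $l\in[L]$: (A) $W_l(t)v_i^{(l)}=\rho(t)u_i^{(l)}$; (B) $W_l^\top(t)u_i^{(l)}=\rho(t)v_i^{(l)}$; (C) $\Phi^\top W_{L:l+1}(t)u_i^{(l)}=0$; (D) $\Phi\,W_{l-1:1}^\top(t)v_i^{(l)}=0$, where $\rho(0)=\varepsilon$ and $\rho(t)=\rho(t-1)\big(1-\eta\lambda-\eta\,\rho(t-1)^{2(L-1)}\big)$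 for $t\ge1$.
   Context: $[L]=\{1,\dots,L\}$. $W_{j:i}=W_j\cdots W_i$ and $W_{j:i}^\top=W_i^\top\cdots W_j^\top$ for $j\ge i$; both are the identity if $j<i$. *)

From mathcomp Require Import all_boot all_order all_algebra.
From mathcomp Require Import reals.
Set Implicit Arguments. Unset Strict Implicit. Unset Printing Implicit Defensive.
Import GRing.Theory Num.Theory.
Local Open Scope ring_scope.

(* Layers are indexed 1-based by nat: F l is W_l for 1 <= l <= L.
   prodW F j i = W_j * W_(j-1) * ... * W_i  (for j >= i >= 1), identity if j < i. *)
Fixpoint prodW (R : ringType) (d : nat) (F : nat -> 'M[R]_d) (i j : nat) : 'M[R]_d :=
  match j with
  | 0 => 1%:M
  | j'.+1 => if (j'.+1 < i)%N then 1%:M else F j'.+1 *m prodW F i j'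
  end.

Fixpoint rho (R : ringType) (L : nat) (eta lam eps : R) (t : nat) : R :=
  match t with
  | 0 => eps
  | t'.+1 => let p := rho L eta lam eps t' in
             p * (1 - eta * lam - eta * p ^+ (2 * (L - 1)))
  end.

Definition orthonormal_vecs (R : ringType) (d m : nat) (u : 'I_m -> 'cV[R]_d) : Prop :=
  forall i j : 'I_m, (u i)^T *m u j = (i == j)%:R%:M.

(* Choose m orthonormal columns V in the common kernel of Phi and Phi^T W_{L:1}(0),
   which has dimension at least d - 2r, and carry them through the layers by the
   initial weights, v^(l+1) = eps^-1 W_l(0) v^(l); as each W_l(0) is eps times an
   isometry, the frames stay orthonormal.  Along such a chain every W_l acts in both
   directions as multiplication by one scalar rho, and Phi kills the chain at both
   ends, so the gradient term acts on it as multiplication by rho^(2L-1): gradient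
   descent preserves the chain and updates rho by the stated recursion. *)

From mathcomp Require Import all_boot all_order all_algebra.
From mathcomp Require Import reals.
From mathcomp Require Import zify ring.
Set Implicit Arguments. Unset Strict Implicit. Unset Printing Implicit Defensive.
Import Order.TTheory GRing.Theory Num.Theory.
Local Open Scope ring_scope.

Lemma mxrank_col_mx_leq (F : fieldType) m1 m2 n (A : 'M[F]_(m1, n)) (B : 'M[F]_(m2, n)) :
  (\rank (col_mx A B) <= \rank A + \rank B)%N.
Proof. by rewrite -addsmxE mxrank_adds_leqif. Qed.

Lemma mxrank_col_mx_trmul_leq (F : fieldType) m n (A B : 'M[F]_(m, n)) :
  (\rank (col_mx A (A^T *m B)) <= 2 * \rank A)%N.
Proof.
rewrite mul2n -addnn -{2}(mxrank_tr A).
exact: leq_trans (mxrank_col_mx_leq _ _) (leq_add (leqnn _) (mxrankM_maxl _ _)).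
Qed.

Lemma trmx_mulmx_self_gt0 (R : realDomainType) n (x : 'cV[R]_n) :
  x != 0 -> 0 < (x^T *m x) 0 0.
Proof.
move=> x_neq0; have sq_ge0 i : 0 <= x^T 0 i * x i 0 by rewrite mxE -expr2 sqr_ge0.
rewrite mxE lt_def sumr_ge0 // andbT; apply: contra x_neq0 => /eqP sum0.
apply/eqP/matrixP => i j; rewrite ord1 mxE.
have := psumr_eq0P (fun i _ => sq_ge0 i) sum0 (i := i) isT.
by rewrite mxE -expr2 => /eqP; rewrite sqrf_eq0 => /eqP.
Qed.

Lemma kernel_unit_vector (R : rcfType) n d (B : 'M[R]_(n, d)) :
  (\rank B < d)%N -> exists y : 'cV[R]_d, y^T *m y = 1%:M /\ B *m y = 0.
Proof.
move=> rkB; set x := (nz_row (kermx B^T))^T.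
have x_neq0 : x != 0.
  by rewrite trmx_eq0 nz_row_eq0 -mxrank_eq0 mxrank_ker mxrank_tr subn_eq0 -ltnNge.
have Bx : B *m x = 0.
  apply: trmx_inj; rewrite trmx_mul trmxK trmx0; apply/sub_kermxP; exact: nz_row_sub.
set s := Num.sqrt ((x^T *m x) 0 0).
have s_gt0 : 0 < s by rewrite sqrtr_gt0 trmx_mulmx_self_gt0.
exists (s^-1 *: x); split; last by rewrite -scalemxAr Bx scaler0.
rewrite -scalemxAr linearZ /= -scalemxAl scalerA [x^T *m x]mx11_scalar -/s.
rewrite -[(x^T *m x) 0 0]sqr_sqrtr ?ltW ?trmx_mulmx_self_gt0 // -/s.
by rewrite -mul_scalar_mx -scalar_mxM -expr2 -exprMn mulVf ?gt_eqF // expr1n.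
Qed.

Lemma orthonormal_kernel_basis (R : rcfType) n d k (A : 'M[R]_(n, d)) :
  (k + \rank A <= d)%N -> exists V : 'M[R]_(d, k), V^T *m V = 1%:M /\ A *m V = 0.
Proof.
elim: k => [|k IHk] rkA.
  by exists 0; split; [apply/matrixP => - [] | rewrite mulmx0].
have [V [VV AV]] := IHk (ltnW rkA).
have rkAV : (\rank (col_mx A V^T) < d)%N.
  apply: leq_ltn_trans (mxrank_col_mx_leq A V^T) _; rewrite addnC.
  by apply: leq_trans rkA; rewrite ltn_add2r ltnS rank_leq_row.
have [y [yy /eqP]] := kernel_unit_vector rkAV.
rewrite mul_col_mx col_mx_eq0 => /andP[/eqP Ay /eqP Vy].
have yV : y^T *m V = 0 by rewrite -[V]trmxK -trmx_mul Vy trmx0.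
(* Stated at width [1 + k], only convertible to [k.+1], so that the block lemmas apply. *)
suff : exists V' : 'M_(d, 1 + k), V'^T *m V' = 1%:M /\ A *m V' = 0 by [].
exists (row_mx y V); split.
  by rewrite tr_row_mx mul_col_row yy yV Vy VV -scalar_mx_block.
by rewrite mul_mx_row Ay AV row_mx0.
Qed.

Lemma prodW_lt (R : nzRingType) d (F : nat -> 'M[R]_d) i j :
  (j < i)%N -> prodW F i j = 1%:M.
Proof. by case: j => //= j ->. Qed.

Lemma prodW_S (R : nzRingType) d (F : nat -> 'M[R]_d) i j :
  (i <= j.+1)%N -> prodW F i j.+1 = F j.+1 *m prodW F i j.
Proof. by move=> le_ij /=; rewrite ltnNge le_ij. Qed.

(* [w l] and [w l.+1] are right and left singular frames of [F l] for the common
   singular value [c]; in the theorem [v^(l) = w l] and [u^(l) = w l.+1]. *)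
Definition singular_chain (R : comNzRingType) d k L
    (F : nat -> 'M[R]_d) (w : nat -> 'M[R]_(d, k)) (c : R) : Prop :=
  forall l, (1 <= l <= L)%N -> F l *m w l = c *: w l.+1 /\ (F l)^T *m w l.+1 = c *: w l.

Section SingularChain.
Variables (R : comNzRingType) (d k L : nat) (F : nat -> 'M[R]_d).
Variables (w : nat -> 'M[R]_(d, k)) (c : R).
Hypothesis chain : singular_chain L F w c.

Lemma prodW_chain_mul i j : (0 < i)%N -> (i <= j.+1)%N -> (j <= L)%N ->
  prodW F i j *m w i = c ^+ (j.+1 - i) *: w j.+1.
Proof.
move=> i_gt0; elim: j => [|j IHj] le_ij le_jL.
  have -> : i = 1%N by lia.
  by rewrite /= mul1mx expr0 scale1r.
have [le_ij1 | -> ] : (i <= j.+1)%N \/ i = j.+2 by lia.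
  rewrite prodW_S // -mulmxA IHj ?(ltnW le_jL) // -scalemxAr (proj1 (chain _)); last by lia.
  by rewrite scalerA -exprSr (subSn le_ij1).
by rewrite prodW_lt // mul1mx subnn expr0 scale1r.
Qed.

Lemma prodW_chain_trmul i j : (0 < i)%N -> (i <= j.+1)%N -> (j <= L)%N ->
  (prodW F i j)^T *m w j.+1 = c ^+ (j.+1 - i) *: w i.
Proof.
move=> i_gt0; elim: j => [|j IHj] le_ij le_jL.
  have -> : i = 1%N by lia.
  by rewrite /= trmx1 mul1mx expr0 scale1r.
have [le_ij1 | -> ] : (i <= j.+1)%N \/ i = j.+2 by lia.
  rewrite prodW_S // trmx_mul -mulmxA (proj2 (chain _)); last by lia.
  by rewrite -scalemxAr IHj ?(ltnW le_jL) // scalerA -exprS (subSn le_ij1).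
by rewrite prodW_lt // trmx1 mul1mx subnn expr0 scale1r.
Qed.

End SingularChain.

Lemma gd_step_singular_chain (R : comNzRingType) d k L (W W' : nat -> 'M[R]_d)
    (w : nat -> 'M[R]_(d, k)) (Phi : 'M[R]_d) (eta lam c : R) :
  singular_chain L W w c -> Phi *m w 1%N = 0 -> Phi^T *m w L.+1 = 0 ->
  (forall l, (1 <= l <= L)%N -> W' l = (1 - eta * lam) *: W l
     - eta *: ((prodW W l.+1 L)^T *m (prodW W 1 L - Phi) *m (prodW W 1 l.-1)^T)) ->
  singular_chain L W' w (c * (1 - eta * lam - eta * c ^+ (2 * (L - 1)))).
Proof.
move=> chain Phi_w1 Phi_wL W'E [//|l] /= le_lL; rewrite W'E //=.
have lower : prodW W 1 l *m w 1%N = c ^+ l *: w l.+1.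
  by rewrite (prodW_chain_mul chain) ?subn1 //; lia.
have lower_tr : (prodW W 1 l)^T *m w l.+1 = c ^+ l *: w 1%N.
  by rewrite (prodW_chain_trmul chain) ?subn1 //; lia.
have upper : prodW W l.+2 L *m w l.+2 = c ^+ (L - l.+1) *: w L.+1.
  by rewrite (prodW_chain_mul chain) ?subSS //; lia.
have upper_tr : (prodW W l.+2 L)^T *m w L.+1 = c ^+ (L - l.+1) *: w l.+2.
  by rewrite (prodW_chain_trmul chain) ?subSS //; lia.
have full : prodW W 1 L *m w 1%N = c ^+ L *: w L.+1.
  by rewrite (prodW_chain_mul chain) ?subn1.
have full_tr : (prodW W 1 L)^T *m w L.+1 = c ^+ L *: w 1%N.
  by rewrite (prodW_chain_trmul chain) ?subn1.
have [W_w W_tr_w] := chain l.+1 le_lL.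
have rho_step a b e : (a + b + e = (2 * (L - 1)).+1)%N ->
    (1 - eta * lam) * c - eta * (c ^+ a * (c ^+ b * c ^+ e))
    = c * (1 - eta * lam - eta * c ^+ (2 * (L - 1))).
  by move=> abe; rewrite -!exprD addnA abe exprS; ring.
split.
- rewrite mulmxBl -!scalemxAl -!mulmxA lower_tr -!scalemxAr mulmxBl full Phi_w1 subr0.
  by rewrite -scalemxAr upper_tr W_w !scalerA -scalerBl -!mulrA rho_step //; lia.
- rewrite linearB /= !linearZ /= !trmx_mul !trmxK linearB /= scalerN.
  rewrite mulmxBl -!scalemxAl -!mulmxA upper -!scalemxAr mulmxBl full_tr Phi_wL subr0.
  by rewrite -scalemxAr lower W_tr_w !scalerA -scalerBl -!mulrA rho_step //; lia.
Qed.

Section InitialFrame.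
Variables (R : fieldType) (d k L : nat) (W0 : nat -> 'M[R]_d) (eps : R).
Hypothesis eps_neq0 : eps != 0.
Hypothesis W0_scaled_isometry :
  forall l, (1 <= l <= L)%N -> (W0 l)^T *m W0 l = (eps ^+ 2)%:M.

Lemma prodW_scaled_isometry j : (j <= L)%N ->
  (prodW W0 1 j)^T *m prodW W0 1 j = (eps ^+ 2 ^+ j)%:M.
Proof.
elim: j => [|j IHj] le_jL; first by rewrite /= trmx1 mul1mx.
rewrite prodW_S // trmx_mul mulmxA -(mulmxA _ _ (W0 j.+1)) W0_scaled_isometry; last by lia.
by rewrite mul_mx_scalar -scalemxAl IHj ?(ltnW le_jL) // scale_scalar_mx -exprS.
Qed.

Definition init_frame (V : 'M[R]_(d, k)) (l : nat) : 'M[R]_(d, k) :=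
  eps ^- l.-1 *: (prodW W0 1 l.-1 *m V).

Lemma init_frame_singular_chain V : singular_chain L W0 (init_frame V) eps.
Proof.
move=> [//|l] le_lL; rewrite /init_frame /= -!scalemxAr !mulmxA; split.
  by rewrite scalerA; congr (_ *: _); rewrite exprS; field; rewrite expf_neq0.
rewrite W0_scaled_isometry // mul_scalar_mx -!scalemxAl !scalerA.
by congr (_ *: _); rewrite exprS; field; rewrite expf_neq0.
Qed.

Lemma init_frame_orthonormal V l : (l <= L.+1)%N ->
  (init_frame V l)^T *m init_frame V l = V^T *m V.
Proof.
move=> le_lL; rewrite /init_frame -scalemxAr linearZ /= -scalemxAl scalerA.
rewrite trmx_mul -mulmxA (mulmxA _ (prodW _ _ _)) prodW_scaled_isometry; last by lia.
rewrite mul_scalar_mx -scalemxAr scalerA exprAC.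
have -> : eps ^- l.-1 / eps ^+ l.-1 * eps ^+ l.-1 ^+ 2 = 1.
  by field; rewrite expf_neq0.
by rewrite scale1r.
Qed.

End InitialFrame.

Lemma orthonormal_vecs_col (R : nzRingType) d k (V : 'M[R]_(d, k)) :
  V^T *m V = 1%:M -> orthonormal_vecs (fun i => col i V).
Proof.
move=> VV i j; apply/matrixP => a b; rewrite !ord1 !mxE eqxx mulr1n.
have := congr1 (fun M : 'M_k => M i j) VV; rewrite !mxE => <-.
by apply: eq_bigr => x _; rewrite !mxE.
Qed.

Theorem lemma1 (R : realType) (L d N r : nat)
  (X : 'M[R]_(d, N)) (Y : 'M[R]_(d, N)) (eta lam eps : R)
  (W : nat -> nat -> 'M[R]_d) :
  (2 <= L)%N -> (0 < d)%N ->
  X *m X^T = 1%:M ->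
  0 < eta -> 0 <= lam -> 0 < eps ->
  (forall l, (1 <= l <= L)%N -> (W 0%N l)^T *m W 0%N l = (eps ^+ 2)%:M) ->
  (forall t l, (1 <= l <= L)%N ->
     W t.+1 l = (1 - eta * lam) *: W t l
       - eta *: ((prodW (W t) l.+1 L)^T
                 *m ((prodW (W t) 1 L *m X - Y) *m X^T)
                 *m (prodW (W t) 1 l.-1)^T)) ->
  \rank (Y *m X^T) = r -> (0 < r)%N ->
  (2 * r < d)%N ->
  let m := (d - 2 * r)%N in
  let Phi := Y *m X^T in
  exists (u v : nat -> 'I_m -> 'cV[R]_d),
    (forall l, (1 <= l <= L)%N -> orthonormal_vecs (u l) /\ orthonormal_vecs (v l)) /\
    (forall l (i : 'I_m), (1 <= l < L)%N -> v l.+1 i = u l i) /\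
    (forall (t : nat) (i : 'I_m) l, (1 <= l <= L)%N ->
       W t l *m v l i = rho L eta lam eps t *: u l i /\
       (W t l)^T *m u l i = rho L eta lam eps t *: v l i /\
       Phi^T *m prodW (W t) l.+1 L *m u l i = 0 /\
       Phi *m (prodW (W t) 1 l.-1)^T *m v l i = 0).
Proof.
move=> _ _ XX _ _ eps_gt0 W0_iso W_upd rkPhi _ lt_2r_d m Phi.
set P0 := prodW (W 0%N) 1 L.
have rk_ker : (m + \rank (col_mx Phi (Phi^T *m P0)) <= d)%N.
  apply: leq_trans (leq_add (leqnn m) (mxrank_col_mx_trmul_leq _ _)) _.
  by rewrite rkPhi; lia.
have [V [VV /eqP]] := orthonormal_kernel_basis rk_ker.
rewrite mul_col_mx col_mx_eq0 => /andP[/eqP Phi_V /eqP PhiP0_V].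
have eps_neq0 : eps != 0 by rewrite gt_eqF.
set w := init_frame (W 0%N) eps V.
have Phi_w1 : Phi *m w 1%N = 0.
  by rewrite /w /init_frame /= mul1mx -scalemxAr Phi_V scaler0.
have Phi_wL : Phi^T *m w L.+1 = 0.
  by rewrite /w /init_frame /= -scalemxAr mulmxA PhiP0_V scaler0.
have chain t : singular_chain L (W t) w (rho L eta lam eps t).
  elim: t => [|t IHt]; first exact: init_frame_singular_chain.
  apply: gd_step_singular_chain IHt Phi_w1 Phi_wL _ => l le_lL.
  by rewrite W_upd // mulmxBl -(mulmxA _ X) XX mulmx1.
exists (fun l i => col i (w l.+1)), (fun l i => col i (w l)); split; [|split] => //.
  by move=> l le_lL; split; apply/orthonormal_vecs_col;
    rewrite (init_frame_orthonormal eps_neq0 W0_iso) //; lia.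
move=> t i [//|l] le_lL; have [W_w W_tr_w] := chain t l.+1 le_lL.
rewrite !colE !mulmxA W_w W_tr_w -!scalemxAl; do !split.
  rewrite -(mulmxA Phi^T) (prodW_chain_mul (chain t)) //.
  by rewrite -scalemxAr Phi_wL scaler0 mul0mx.
rewrite -(mulmxA Phi) (prodW_chain_trmul (chain t)) //=; last by lia.
by rewrite -scalemxAr Phi_w1 scaler0 mul0mx.
Qed.
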